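(* Let $f:Y\to X$ be a normal uniform Kan fibration with structure $\phi$. Then transport along degenerate paths is trivial: for every $k\ge1$, every $x:\mathrm{I}^k\to X$, every $\delta\in\{0,1\}$ and every $y:\mathrm{I}^k\to Y$ with $fy=x$, the transport of $y$ along the degenerate path $x\circ\mathrm{pr}:\mathrm{I}^k\times\mathrm{I}\to X$ starting at endpoint $\delta$ equals $y$.
   Context: Let $\mathbb{B}$ be the category of finite sets $[n]=\{\bot,x_1,\dots,x_n,\top\}$ ($n\ge0$, $\bot\ne\top$) and functions preserving $\bot,\top$; cartesian cubical sets are presheaves on $\mathbb{B}^{op}$. $\mathrm{I}^n$ is the representable on $[n]$, $\mathrm{I}^n\cong\mathrm{I}\times\dots\times\mathrm{I}$, $\mathrm{I}=\mathrm{I}^1$, $\mathrm{I}^0=1$; the two maps $[1]\to[0]$ give endpoints $0,1:1\to\mathrm{I}$. For $1\le i\le n$, $d\in\{0,1\}$, the face $\alpha_i^d:\mathrm{I}^{n-1}\to\mathrm{I}^n$ inserts $d$ in coordinate $i$; for $e\in\{0,1\}$ the open box $\sqcup^n_e\rightarrowtail\mathrm{I}^n$ is the union of the images of all faces $\alpha_i^d$ with $(i,d)\ne(1,e)$, with inclusion $i^n_e$. In particular $\sqcup^1_e$ is the endpoint $1-e$ of $\mathrm{I}$. A uniform Kan fibration structure on $f:Y\to X$: for each $n\ge1$, $e\in\{0,1\}$, $k\ge1$ and commutative square $b:\mathrm{I}^k\times\sqcup^n_e\to Y$, $a:\mathrm{I}^k\times\mathrm{I}^n\to X$ with $fb=a(1\times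 i^n_e)$, a chosen filler $\phi(a,b)$ ($\phi(a,b)(1\times i^n_e)=b$, $f\phi(a,b)=a$), with $\phi(a,b)(\alpha\times1)=\phi(a(\alpha\times1),b(\alpha\times1))$ for all $\alpha:\mathrm{I}^j\to\mathrm{I}^k$ ($j\ge1$). It is normal if for all $n\ge0$, $e$, $k\ge1$ and $c:\mathrm{I}^k\times\mathrm{I}^n\to Y$, with $\pi:\mathrm{I}^{n+1}\to\mathrm{I}^n$ forgetting the first coordinate, $\phi(fc(1\times\pi),c(1\times\pi)(1\times i^{n+1}_e))=c(1\times\pi)$. Transport: given $k\ge1$, $\delta\in\{0,1\}$, a path $p:\mathrm{I}^k\times\mathrm{I}\to X$ and $y:\mathrm{I}^k\to Y$ with $fy=p\circ(1\times\delta)$, regard $y$ as a map $\mathrm{I}^k\times\sqcup^1_{1-\delta}\to Y$; the transport of $y$ along $p$ is $\phi(p,y)\circ(1\times(1-\delta)):\mathrm{I}^k\to Y$. *)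

From Stdlib Require Import ProofIrrelevance.
From mathcomp Require Import all_boot.

Set Implicit Arguments.
Unset Strict Implicit.
Unset Printing Implicit Defensive.

(* [n] = {bot, x_1, ..., x_n, top} is encoded as 'I_n.+2 with
   bot = ord0 (= 0), x_i = i (1 <= i <= n), top = ord_max (= n+1). *)

Definition Bpred (m n : nat) (f : {ffun 'I_m.+2 -> 'I_n.+2}) : bool :=
  (f ord0 == ord0) && (f ord_max == ord_max).
Definition Bhom (m n : nat) := {f : {ffun 'I_m.+2 -> 'I_n.+2} | Bpred f}.

Definition Bfun m n (f : Bhom m n) : 'I_m.+2 -> 'I_n.+2 := sval f.

Lemma Bid_proof n :
  ([ffun i : 'I_n.+2 => i] ord0 == ord0) && ([ffun i : 'I_n.+2 => i] ord_max == ord_max).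
Proof. by rewrite /Bpred !ffunE !eqxx. Qed.

Definition Bid n : Bhom n n := exist (@Bpred _ _) _ (Bid_proof n).

Lemma Bcomp_proof m n p (g : Bhom n p) (h : Bhom m n) :
  ([ffun i => Bfun g (Bfun h i)] ord0 == ord0) &&
  ([ffun i => Bfun g (Bfun h i)] ord_max == ord_max).
Proof.
case: g => g pg; case: h => h ph; rewrite /Bfun /=.
move/andP: pg => [/eqP g0 /eqP g1]; move/andP: ph => [/eqP h0 /eqP h1].
by rewrite !ffunE h0 h1 g0 g1 !eqxx.
Qed.

Definition Bcomp m n p (g : Bhom n p) (h : Bhom m n) : Bhom m p :=
  exist (@Bpred _ _) _ (Bcomp_proof g h).

Lemma Bhom_eq m n (g h : Bhom m n) : (forall i, Bfun g i = Bfun h i) -> g = h.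
Proof. by move=> E; apply: val_inj; apply/ffunP => i; apply: E. Qed.

Lemma BcompA m n p q (g : Bhom p q) (h : Bhom n p) (l : Bhom m n) :
  Bcomp g (Bcomp h l) = Bcomp (Bcomp g h) l.
Proof. by apply: Bhom_eq => i; rewrite /Bfun /= !ffunE /Bfun /= ?ffunE. Qed.

Lemma Bcomp1l m n (h : Bhom m n) : Bcomp (Bid n) h = h.
Proof. by apply: Bhom_eq => i; rewrite /Bfun /= !ffunE /Bfun /= ?ffunE. Qed.

(** * Cartesian cubical sets: presheaves on B^op, i.e. functors B -> Type *)

Record cset := CSet {
  ob :> nat -> Type;
  act : forall m n, Bhom m n -> ob m -> ob n;
  act_id : forall n (x : ob n), act (Bid n) x = x;
  act_comp : forall m n p (g : Bhom n p) (h : Bhom m n) (x : ob m),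
      act (Bcomp g h) x = act g (act h x)
}.
Arguments act {c m n}.

Unset Implicit Arguments.
Record hom (X Y : cset) := Hom {
  hfn :> forall n, X n -> Y n;
  hnat : forall m n (g : Bhom m n) (x : X m), hfn n (@act X m n g x) = @act Y m n g (hfn m x)
}.

Arguments hfn {X Y} h n x.
Arguments Hom {X Y} hfn hnat.
Set Implicit Arguments.

Definition heq X Y (a b : hom X Y) : Prop := forall n (x : X n), a n x = b n x.

Section Ops.

Lemma hcomp_nat X Y Z (g : hom Y Z) (f : hom X Y) m n (h : Bhom m n) (x : X m) :
  g n (f n (act h x)) = act h (g m (f m x)).
Proof. by rewrite !hnat. Qed.

Definition hcomp X Y Z (g : hom Y Z) (f : hom X Y) : hom X Z :=
  Hom (fun n x => g n (f n x)) (hcomp_nat g f).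

Definition hid X : hom X X := @Hom X X (fun n x => x) (fun _ _ _ _ => erefl).

Definition prod (X Y : cset) : cset.
Proof.
refine (@CSet (fun n => (X n * Y n)%type)
          (fun m n g p => (act g p.1, act g p.2)) _ _).
- by move=> n [x y] /=; rewrite !act_id.
- by move=> m n p g h [x y] /=; rewrite !act_comp.
Defined.

Definition hfst X Y : hom (prod X Y) X :=
  @Hom (prod X Y) X (fun n p => p.1) (fun _ _ _ _ => erefl).
Definition hsnd X Y : hom (prod X Y) Y :=
  @Hom (prod X Y) Y (fun n p => p.2) (fun _ _ _ _ => erefl).

Lemma hpair_nat X Y Z (f : hom X Y) (g : hom X Z) m n (h : Bhom m n) (x : X m) :
  ((f n (act h x), g n (act h x)) : prod Y Z n) =
  @act (prod Y Z) m n h ((f m x, g m x) : prod Y Z m).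
Proof. by rewrite /= !hnat. Qed.

Definition hpair X Y Z (f : hom X Y) (g : hom X Z) : hom X (prod Y Z) :=
  @Hom X (prod Y Z) (fun n x => (f n x, g n x)) (hpair_nat f g).

Definition pmap A B C D (f : hom A B) (g : hom C D) : hom (prod A C) (prod B D) :=
  hpair (hcomp f (@hfst A C)) (hcomp g (@hsnd A C)).

Definition subcset (X : cset) (P : forall n, X n -> Prop)
  (stab : forall m n (g : Bhom m n) (x : X m), P m x -> P n (act g x)) : cset.
Proof.
refine (@CSet (fun n => {x : X n | P n x})
          (fun m n g x => exist _ (act g (sval x)) (stab m n g _ (proj2_sig x))) _ _).
- move=> n [x Px] /=; apply: eq_sig_hprop => /=; last by rewrite act_id.
  by move=> y; apply: proof_irrelevance.
- move=> m n p g h [x Px] /=; apply: eq_sig_hprop => /=; last by rewrite act_comp.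
  by move=> y; apply: proof_irrelevance.
Defined.

Definition incl X P stab : hom (@subcset X P stab) X :=
  @Hom (@subcset X P stab) X (fun n x => sval x) (fun _ _ _ _ => erefl).

Definition himg A X (h : hom A X) n (x : X n) : Prop := exists a : A n, h n a = x.

Lemma himg_stab A X (h : hom A X) m n (g : Bhom m n) (x : X m) :
  himg h x -> himg h (act g x).
Proof. by case=> a <-; exists (act g a); rewrite hnat. Qed.

End Ops.

Definition Rep (n : nat) : cset.
Proof.
refine (@CSet (fun m => Bhom n m) (fun m p g h => Bcomp g h) _ _).
- by move=> m h; apply: Bcomp1l.
- by move=> m p q g h l; rewrite BcompA.
Defined.

Definition yo a b (s : Bhom b a) : hom (Rep a) (Rep b).
Proof.
refine (@Hom (Rep a) (Rep b) (fun m g => Bcomp g s) _).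
by move=> m p g h /=; rewrite BcompA.
Defined.

(** Faces alpha_i^d : I^n -> I^(n+1) (n+1 = dimension of the target);
    i : 'I_n.+1 is the 0-based coordinate (coordinate i+1 in the paper),
    d = false means 0 (bot), d = true means 1 (top). *)
Definition face_fun n (i : 'I_n.+1) (d : bool) : {ffun 'I_n.+3 -> 'I_n.+2} :=
  [ffun j : 'I_n.+3 =>
     if val j == i.+1 then (if d then ord_max else ord0)
     else if val j <= i then inord j else inord j.-1].

Lemma face_proof n (i : 'I_n.+1) d :
  (face_fun i d ord0 == ord0) && (face_fun i d ord_max == ord_max).
Proof.
have ilt := ltn_ord i.
rewrite /Bpred !ffunE /=; apply/andP; split; apply/eqP.
- by apply: val_inj; rewrite /= inordK.
- have -> : (n.+2 == i.+1) = false by apply/negbTE; rewrite eqSS neq_ltn ilt orbT.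
  have -> : (n.+1 < i) = false by apply/negbTE; rewrite -leqNgt; apply: ltnW.
  by apply: val_inj; rewrite /= inordK.
Qed.

Definition faceB n (i : 'I_n.+1) d : Bhom n.+1 n := exist (@Bpred _ _) _ (face_proof i d).
Definition face n (i : 'I_n.+1) d : hom (Rep n) (Rep n.+1) := yo (faceB i d).

(** Open box: for e : bool, box n e is the subobject of I^(n+1) which is the
    union of the images of all faces alpha_i^d with (i,d) <> (1,e)
    (i.e. (i,d) <> (0,e) with 0-based i). *)
Definition boxP n (e : bool) m (z : Rep n.+1 m) : Prop :=
  exists (i : 'I_n.+1) (d : bool), ~ (val i = 0 /\ d = e) /\ himg (face i d) z.

Lemma boxP_stab n e m p (g : Bhom m p) (z : Rep n.+1 m) :
  @boxP n e m z -> @boxP n e p (act g z).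
Proof. by case=> i [d [H Hi]]; exists i, d; split => //; apply: himg_stab. Qed.

Definition box n e : cset := subcset (@boxP_stab n e).
Definition ibox n e : hom (box n e) (Rep n.+1) := incl (@boxP_stab n e).

(** Projection pi : I^(n+1) -> I^n forgetting the first coordinate;
    B-map [n] -> [n+1], bot |-> bot, x_j |-> x_{j+1}, top |-> top. *)
Definition shift_fun n : {ffun 'I_n.+2 -> 'I_n.+3} :=
  [ffun j : 'I_n.+2 => if val j == 0 then ord0 else inord j.+1].

Lemma shift_proof n : (shift_fun n ord0 == ord0) && (shift_fun n ord_max == ord_max).
Proof.
rewrite /Bpred !ffunE /=; apply/eqP; apply: val_inj => /=; by rewrite inordK.
Qed.

Definition piproj n : hom (Rep n.+1) (Rep n) := yo (exist (@Bpred _ _) _ (shift_proof n)).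

(** Endpoints 0,1 : 1 = I^0 -> I, from the two maps [1] -> [0]
    (d = false: x_1 |-> bot, endpoint 0; d = true: x_1 |-> top, endpoint 1). *)
Definition ep_fun (d : bool) : {ffun 'I_3 -> 'I_2} :=
  [ffun j : 'I_3 => if val j == 0 then ord0 else if val j == 2 then ord_max
                    else (if d then ord_max else ord0)].

Lemma ep_proof d : (ep_fun d ord0 == ord0) && (ep_fun d ord_max == ord_max).
Proof. by rewrite /Bpred !ffunE /= !eqxx. Qed.

Definition endpt (d : bool) : hom (Rep 0) (Rep 1) := yo (exist (@Bpred _ _) _ (ep_proof d)).

Definition bang_fun k : {ffun 'I_2 -> 'I_k.+2} :=
  [ffun j : 'I_2 => if val j == 0 then ord0 else ord_max].
Lemma bang_proof k : (bang_fun k ord0 == ord0) && (bang_fun k ord_max == ord_max).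
Proof. by rewrite /Bpred !ffunE /= !eqxx. Qed.
Definition bang k : hom (Rep k) (Rep 0) := yo (exist (@Bpred _ _) _ (bang_proof k)).

(* A filling operation: phi n k e a b is the chosen filler for the square
   b : I^k x box^(n+1)_e -> Y, a : I^k x I^(n+1) -> X (the open box has
   dimension n+1 >= 1).  It is only constrained on commuting squares with
   k >= 1 (values elsewhere are irrelevant). *)
Definition filler_op (X Y : cset) :=
  forall (n k : nat) (e : bool),
    hom (prod (Rep k) (Rep n.+1)) X -> hom (prod (Rep k) (box n e)) Y ->
    hom (prod (Rep k) (Rep n.+1)) Y.

Definition square X Y (f : hom Y X) n k e
  (a : hom (prod (Rep k) (Rep n.+1)) X) (b : hom (prod (Rep k) (box n e)) Y) : Prop :=
  heq (hcomp f b) (hcomp a (pmap (hid (Rep k)) (ibox n e))).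

Definition is_uniform_kan X Y (f : hom Y X) (phi : filler_op X Y) : Prop :=
  (forall n k e a b, 0 < k -> square f a b ->
     heq (hcomp (phi n k e a b) (pmap (hid (Rep k)) (ibox n e))) b /\
     heq (hcomp f (phi n k e a b)) a) /\
  (forall n k j e a b (al : hom (Rep j) (Rep k)), 0 < k -> 0 < j ->
     square f a b ->
     heq (hcomp (phi n k e a b) (pmap al (hid (Rep n.+1))))
         (phi n j e (hcomp a (pmap al (hid (Rep n.+1))))
                    (hcomp b (pmap al (hid (box n e)))))).

Definition is_normal X Y (f : hom Y X) (phi : filler_op X Y) : Prop :=
  forall n k e (c : hom (prod (Rep k) (Rep n)) Y), 0 < k ->
    let cp := hcomp c (pmap (hid (Rep k)) (piproj n)) in
    heq (phi n k e (hcomp f cp) (hcomp cp (pmap (hid (Rep k)) (ibox n e)))) cp.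

(* Transport of y along p : I^k x I -> X starting at endpoint d:
   y is regarded as a map I^k x box^1_{1-d} -> Y (box^1_{1-d} is the
   endpoint d) by precomposing with the first projection, and the filler is
   restricted along 1 x (1-d) : I^k = I^k x 1 -> I^k x I. *)
Definition transport X Y (phi : filler_op X Y) k
  (p : hom (prod (Rep k) (Rep 1)) X) (y : hom (Rep k) Y) (d : bool) : hom (Rep k) Y :=
  hcomp (phi 0 k (~~ d) p (hcomp y (@hfst (Rep k) (box 0 (~~ d)))))
        (hpair (hid (Rep k)) (hcomp (endpt (~~ d)) (bang k))).

(* Normality says that the chosen filler of a square which is constant in the
   box direction is the constant filler.  The square defining transport of y along x o pr is of this
   kind (it is f o y o pr, with y o pr on the open box), so its filler is
   y o pr, whose restriction to either end of the path is y. *)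
From Pilot Require Import Defs.
From mathcomp Require Import all_boot.
From Stdlib Require Import FunctionalExtensionality ProofIrrelevance.

Lemma hom_ext {X Y : cset} {a b : hom X Y} : heq a b -> a = b.
Proof.
case: a b => [fa pa] [fb pb] /= E.
have efab : fa = fb.
  by apply: functional_extensionality_dep => n; apply: functional_extensionality.
by subst fb; f_equal; apply: proof_irrelevance.
Qed.

Lemma hcompA {A B C D : cset} (h : hom C D) (g : hom B C) (f : hom A B) :
  hcomp h (hcomp g f) = hcomp (hcomp h g) f.
Proof. exact: hom_ext. Qed.

Lemma hcomp_hid {A B : cset} (f : hom A B) : hcomp f (hid A) = f.
Proof. exact: hom_ext. Qed.

Lemma hfst_pmap_id {A B C : cset} (h : hom B C) :
  hcomp (@hfst A C) (Defs.pmap (hid A) h) = @hfst A B.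
Proof. exact: hom_ext. Qed.

Lemma hfst_hpair {A B C : cset} (f : hom A B) (g : hom A C) :
  hcomp (@hfst B C) (hpair f g) = f.
Proof. exact: hom_ext. Qed.

Section NormalFillers.

Variables (X Y : cset) (f : hom Y X) (phi : filler_op X Y).
Hypothesis normal_phi : is_normal f phi.

Lemma normal_filler_const n k e (z : hom (Rep k) Y) : 0 < k ->
  phi n k e (hcomp (hcomp f z) (@hfst (Rep k) (Rep n.+1)))
            (hcomp z (@hfst (Rep k) (box n e)))
  = hcomp z (@hfst (Rep k) (Rep n.+1)).
Proof.
move=> k_gt0; apply: hom_ext.
have := normal_phi n k e (hcomp z (@hfst (Rep k) (Rep n))) k_gt0.
by rewrite /= -!hcompA !hfst_pmap_id (hcompA (hfst _ _) (Defs.pmap _ _)) !hfst_pmap_id.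
Qed.

Lemma transport_const k (z : hom (Rep k) Y) d : 0 < k ->
  transport phi (hcomp (hcomp f z) (@hfst (Rep k) (Rep 1))) z d = z.
Proof.
by move=> k_gt0; rewrite /transport normal_filler_const // -hcompA hfst_hpair hcomp_hid.
Qed.

End NormalFillers.

Theorem lemma3p12 (X Y : cset) (f : hom Y X) (phi : filler_op X Y)
  (Hkan : is_uniform_kan f phi) (Hnorm : is_normal f phi)
  (k : nat) (hk : 0 < k) (x : hom (Rep k) X) (d : bool) (y : hom (Rep k) Y)
  (hy : heq (hcomp f y) x) :
  heq (transport phi (hcomp x (@hfst (Rep k) (Rep 1))) y d) y.
Proof.
by rewrite -(hom_ext hy) transport_const.
Qed.
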